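(* Let $D$ be a unique factorization domain and $D'=D_{mult}/\sim$. For every nonzero element $[m]_\sim$ of $D'$, $\tau'_{[m]_\sim}=P_{J([m]_\sim)}$, and hence the factor semigroup $D'/\tau'_{[m]_\sim}$ satisfies Condition $( * )$.
   Context: $D_{mult}$ is the multiplicative semigroup of $D$, $\sim$ the associate congruence, $[x]_\sim$ the class of $x$; $\gcd([a]_\sim,[b]_\sim)=[\gcd(a,b)]_\sim$ in $D'$. $\tau'_{[m]_\sim}$ is the relation on $D'$ with $([a]_\sim,[b]_\sim)\in\tau'_{[m]_\sim}$ iff $\gcd([a]_\sim,[m]_\sim)=\gcd([b]_\sim,[m]_\sim)$. $J([m]_\sim)$ is the ideal of $D'$ generated by $[m]_\sim$. For a semigroup $S$, $H\subseteq S$, $a\in S$: $H\dots a=\{(x,y)\in S\times S: xay\in H\}$, $P_H=\{(a,b)\in S\times S: H\dots a=H\dots b\}$. For a commutative semigroup $S$ with zero $0$, $A(s)=\{x\in S: xs=0\}$. $S$ satisfies Condition $( * )$ if: (1) $S$ is a commutative monoid with a zero; (2) $A(s)\neq\{0\}$ for every non-identity $s$; (3) $A(s)=A(t)$ implies $s=t$. *)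

From HB Require Import structures.
From mathcomp Require Import all_boot all_algebra.
From Stdlib Require Import ClassicalEpsilon.
Set Implicit Arguments. Unset Strict Implicit. Unset Printing Implicit Defensive.
Import GRing.Theory.
Local Open Scope ring_scope.

Section Semigroup.
Variables (T : Type) (op : T -> T -> T).

Definition dots (H : T -> Prop) (a : T) : T * T -> Prop :=
  fun p => H (op (op p.1 a) p.2).

Definition P_rel (H : T -> Prop) (a b : T) : Prop := dots H a = dots H b.

(* J(a): the (two-sided) ideal generated by a, i.e. S^1 a S^1 *)
Definition ideal_gen (a : T) : T -> Prop :=
  fun x => x = a \/ (exists s, x = op s a) \/ (exists s, x = op a s)
           \/ (exists s t, x = op (op s a) t).

Definition annih (z s : T) : T -> Prop := fun x => op x s = z.

Definition condition_star : Prop :=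
  (forall x y w, op x (op y w) = op (op x y) w) /\
  (forall x y, op x y = op y x) /\
  exists e z : T,
    (forall x, op e x = x /\ op x e = x) /\
    (forall x, op z x = z /\ op x z = z) /\
    (forall s, s <> e -> annih z s <> (fun x => x = z)) /\
    (forall s t, annih z s = annih z t -> s = t).

(* Factor (quotient) structure by a relation R: classes as predicates. *)
Definition quot (R : T -> T -> Prop) := {P : T -> Prop | exists a, P = R a}.

Definition cls (R : T -> T -> Prop) (a : T) : quot R :=
  exist (fun P => exists a', P = R a') (R a) (ex_intro _ a erefl).

Definition repr (R : T -> T -> Prop) (X : quot R) : T :=
  proj1_sig (constructive_indefinite_description _ (proj2_sig X)).

(* induced operation on classes (well defined when R is a congruence) *)
Definition qop (R : T -> T -> Prop) (X Y : quot R) : quot R :=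
  cls R (op (repr X) (repr Y)).

End Semigroup.

Section Ring.
Variable D : idomainType.

Definition associates (a b : D) : Prop := exists2 u, u \is a GRing.unit & a = u * b.

Definition irreducible_elt (a : D) : Prop :=
  a != 0 /\ a \isn't a GRing.unit /\
  forall b c, a = b * c -> b \is a GRing.unit \/ c \is a GRing.unit.

Definition is_UFD : Prop :=
  (forall a : D, a != 0 -> a \isn't a GRing.unit ->
     exists s : seq D, (forall x, x \in s -> irreducible_elt x) /\ a = \prod_(x <- s) x) /\
  (forall s t : seq D,
     (forall x, x \in s -> irreducible_elt x) ->
     (forall x, x \in t -> irreducible_elt x) ->
     \prod_(x <- s) x = \prod_(x <- t) x ->
     exists t' : seq D, perm_eq t t' /\ size s = size t' /\
       forall i, (i < size s)%N -> associates (nth 0 s i) (nth 0 t' i)).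

Definition dvd (a b : D) : Prop := exists c, b = c * a.

Definition is_gcd (g a b : D) : Prop :=
  dvd g a /\ dvd g b /\ forall d, dvd d a -> dvd d b -> dvd d g.

Definition Dp := quot associates.
Definition Dcls (a : D) : Dp := cls associates a.
Definition Dmul : Dp -> Dp -> Dp := @qop D (@GRing.mul D) associates.

(* tau'_M : ([a],[b]) in tau'_M iff gcd([a],M) = gcd([b],M), where
   gcd([a],[m]) = [gcd(a,m)]. *)
Definition tau' (M X Y : Dp) : Prop :=
  exists a b m ga gb, X = Dcls a /\ Y = Dcls b /\ M = Dcls m /\
    is_gcd ga a m /\ is_gcd gb b m /\ Dcls ga = Dcls gb.

End Ring.

From Pilot Require Import Defs.
From mathcomp Require Import all_boot all_algebra.
From mathcomp Require Import ring.
From Stdlib Require Import Classical ClassicalEpsilon ProofIrrelevance.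
From Stdlib Require Import FunctionalExtensionality PropExtensionality.
Set Implicit Arguments. Unset Strict Implicit. Unset Printing Implicit Defensive.
Import GRing.Theory.
Local Open Scope ring_scope.

(* Let g = gcd(a, m) and m = m' g.  Unique factorisation gives Euclid's lemma, and since the
   cofactor of a is coprime to m', we get m | u a <-> m' | u.  Hence gcd(a, m) ~ gcd(b, m)
   holds exactly when a and b have the same annihilator {u | m | u a} modulo m.  As J([m]) is
   the set of classes of multiples of m, P_J([m]) is that same relation.  In the quotient,
   the annihilator of the class of a is the image of {u | m | u a}, so classes are separated
   by their annihilators and only the class of 1 has annihilator {0}: condition ( * ). *)

Section Quotient.
Variables (T : Type) (op : T -> T -> T) (R : T -> T -> Prop).

Lemma cls_repr (X : quot R) : cls R (Defs.repr X) = X.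
Proof.
case: X => P HP; rewrite /Defs.repr /cls /=.
case: (constructive_indefinite_description _ _) => a /= Ea.
by apply: subset_eq_compat.
Qed.

Hypothesis R_refl : forall a, R a a.
Hypothesis R_sym : forall a b, R a b -> R b a.
Hypothesis R_trans : forall a b c, R a b -> R b c -> R a c.

Lemma cls_eq a b : cls R a = cls R b <-> R a b.
Proof.
split=> [/(f_equal (@proj1_sig _ _)) /= -> // | Rab].
apply: subset_eq_compat; apply: functional_extensionality => x.
by apply: propositional_extensionality; split; eauto.
Qed.

Hypothesis R_cong : forall a a' b b', R a a' -> R b b' -> R (op a b) (op a' b').

Lemma qop_cls a b : qop op (cls R a) (cls R b) = cls R (op a b).
Proof.
have repr_cls c : R (Defs.repr (cls R c)) c by apply/cls_eq; rewrite cls_repr.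
by apply/cls_eq; apply: R_cong; apply: repr_cls.
Qed.

End Quotient.

Section Divisibility.
Variable D : idomainType.
Implicit Types a b c d g n p u : D.

Lemma dvdd a : dvd a a. Proof. by exists 1; rewrite mul1r. Qed.

Lemma dvd0 a : dvd a 0. Proof. by exists 0; rewrite mul0r. Qed.

Lemma dvd_trans a b c : dvd a b -> dvd b c -> dvd a c.
Proof. by move=> [x ->] [y ->]; exists (y * x); rewrite mulrA. Qed.

Lemma dvd_mull a b c : dvd a b -> dvd a (c * b).
Proof. by move=> [x ->]; exists (c * x); rewrite mulrA. Qed.

Lemma dvd_mulr a b c : dvd a b -> dvd a (b * c).
Proof. by move=> [x ->]; exists (x * c); rewrite mulrAC. Qed.

Lemma dvd_pmul2r a b c : c != 0 -> dvd (a * c) (b * c) <-> dvd a b.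
Proof.
move=> c0; split=> [[k] | [k ->]]; last by exists k; rewrite mulrA.
by rewrite mulrA => /(mulIf c0) ->; exists k.
Qed.

Lemma unit_dvd u a : u \is a GRing.unit -> dvd u a.
Proof. by move=> uu; exists (a / u); rewrite mulrVK. Qed.

Lemma dvd1_unit d : dvd d 1 -> d \is a GRing.unit.
Proof. by case=> k /esym k_d; apply/unitrPr; exists k; rewrite mulrC. Qed.

Lemma associates_refl a : associates a a.
Proof. by exists 1; rewrite ?unitr1 ?mul1r. Qed.

Lemma associates_sym a b : associates a b -> associates b a.
Proof. by move=> [u uu ->]; exists u^-1; rewrite ?unitrV ?mulKr. Qed.

Lemma associates_trans a b c : associates a b -> associates b c -> associates a c.
Proof. by move=> [u uu ->] [v uv ->]; exists (u * v); rewrite ?unitrM ?uu ?uv ?mulrA. Qed.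

Lemma associates_mul a a' b b' :
  associates a a' -> associates b b' -> associates (a * b) (a' * b').
Proof.
by move=> [u uu ->] [v uv ->]; exists (u * v); rewrite ?unitrM ?uu ?uv //; ring.
Qed.

Lemma associates_dvdl a a' b : associates a a' -> dvd a b <-> dvd a' b.
Proof.
move=> [w uw ->]; split=> [[k ->] | [k ->]]; first by exists (k * w); rewrite mulrA.
by exists (k / w); rewrite -mulrA mulKr.
Qed.

Lemma associates_dvdr a b b' : associates b b' -> dvd a b <-> dvd a b'.
Proof.
move=> [w uw ->]; split=> [[k Ek] | [k ->]]; last by exists (w * k); rewrite mulrA.
by exists (w^-1 * k); rewrite -mulrA -Ek mulKr.
Qed.

Lemma dvd_prod_mem (s : seq D) x : x \in s -> dvd x (\prod_(y <- s) y).
Proof.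
elim: s => // y s IHs; rewrite inE big_cons => /predU1P [-> | /IHs]; last exact: dvd_mull.
exact: dvd_mulr (dvdd _).
Qed.

Lemma is_gcd_associatesr g a n n' : associates n n' -> is_gcd g a n' -> is_gcd g a n.
Proof.
move=> nn' [ga [gn' g_max]]; split; [by [] | split; first exact/(associates_dvdr _ nn')].
by move=> d da dn; apply: g_max => //; apply/(associates_dvdr _ nn').
Qed.

Lemma dvd_associates a b : b != 0 -> dvd a b -> dvd b a -> associates a b.
Proof.
move=> b0 [x Ex] [y Ey]; exists y; last exact: Ey; apply: dvd1_unit; exists x.
by apply: (mulIf b0); rewrite mul1r {1}Ex Ey mulrA.
Qed.

Lemma associates_cofactor a b a' b' :
  a * b = a' * b' -> a' != 0 -> associates a a' -> associates b' b.
Proof.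
move=> Eab a'0 [w uw Ea]; exists w => //; apply: (mulfI a'0).
by rewrite -Eab Ea mulrCA mulrA.
Qed.

End Divisibility.

Section Primes.
Variable D : idomainType.
Implicit Types a b c d g n p u : D.

Definition prime_elt p : Prop :=
  [/\ p != 0, p \isn't a GRing.unit & forall a b, dvd p (a * b) -> dvd p a \/ dvd p b].

Definition coprime_elt a b : Prop :=
  forall d, dvd d a -> dvd d b -> d \is a GRing.unit.

Lemma prime_dvd_cancel p d b : prime_elt p -> ~ dvd p d -> dvd d (b * p) -> dvd d b.
Proof.
case=> p0 _ p_prime npd [x Ex].
have [[y Ey] | //] : dvd p x \/ dvd p d by apply: p_prime; exists b; rewrite -Ex mulrC.
by exists y; apply: (mulIf p0); rewrite Ex Ey mulrAC.
Qed.

Lemma is_gcd_unit a u : u \is a GRing.unit -> is_gcd 1 a u.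
Proof.
move=> uu; split; [|split]; [exact: unit_dvd (unitr1 _)..|].
move=> d _ [k Ek]; apply: unit_dvd; apply: dvd1_unit; exists (u^-1 * k).
by rewrite -mulrA -Ek mulVr.
Qed.

Lemma is_gcd_mul_prime p g a n :
  prime_elt p -> is_gcd g a n -> is_gcd (g * p) (a * p) (n * p).
Proof.
move=> pP [ga [gn g_max]]; have [p0 _ _] := pP.
split; [|split]; [exact/(dvd_pmul2r _ _ p0)..|move=> d da dn].
have [[d' Ed] | npd] := classic (dvd p d).
  rewrite Ed in da dn *; apply/(dvd_pmul2r _ _ p0).
  by apply: g_max; [move/(dvd_pmul2r _ _ p0): da | move/(dvd_pmul2r _ _ p0): dn].
apply: dvd_mulr; apply: g_max; exact: prime_dvd_cancel pP npd _.
Qed.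

Lemma is_gcd_mul_prime_coprime p g a n :
  prime_elt p -> ~ dvd p a -> is_gcd g a n -> is_gcd g a (n * p).
Proof.
move=> pP npa [ga [gn g_max]]; split; [by [] | split; first exact: dvd_mulr].
move=> d da dnp; apply: g_max => //; apply: prime_dvd_cancel pP _ dnp.
by move=> pd; apply: npa; exact: dvd_trans pd da.
Qed.

Lemma coprime_dvd_mul_prime p n a u :
  prime_elt p -> coprime_elt a (n * p) -> dvd (n * p) (u * a) ->
  exists2 u', u = u' * p & coprime_elt a n /\ dvd n (u' * a).
Proof.
move=> [p0 pnu p_prime] cop [c Ec].
have [[u' Eu] | pa] : dvd p u \/ dvd p a.
- by apply: p_prime; exists (c * n); rewrite Ec mulrA.
- exists u' => //; split=> [d da dn | ]; first by apply: cop => //; exact: dvd_mulr.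
  by exists c; apply: (mulIf p0); rewrite mulrAC -Eu Ec mulrA.
- by case/negP: pnu; apply: cop pa (dvd_mull _ (dvdd p)).
Qed.

Section Factorial.
Hypothesis ufdD : is_UFD D.

Lemma irreducible_prime p : irreducible_elt p -> prime_elt p.
Proof.
move=> pI; have [p0 [pnu p_irr]] := pI; split=> // a b [c Ec].
have [-> | a0] := eqVneq a 0; first by left; exact: dvd0.
have [-> | b0] := eqVneq b 0; first by right; exact: dvd0.
have [ua | nua] := boolP (a \is a GRing.unit).
  by right; exists (a^-1 * c); rewrite -mulrA -Ec mulKr.
have [ub | nub] := boolP (b \is a GRing.unit).
  by left; exists (c / b); rewrite mulrAC -Ec mulrK.
have c0 : c != 0 by apply: contraNneq (mulf_neq0 a0 b0); rewrite Ec => ->; rewrite mul0r.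
have [uc | nuc] := boolP (c \is a GRing.unit).
  have : p = (c^-1 * a) * b by rewrite -mulrA Ec mulKr.
  by case/p_irr; [rewrite unitrM (negbTE nua) andbF | rewrite (negbTE nub)].
have [sa [sa_irr Ea]] := ufdD.1 a a0 nua.
have [sb [sb_irr Eb]] := ufdD.1 b b0 nub.
have [sc [sc_irr Esc]] := ufdD.1 c c0 nuc.
have [|||t [perm_t [size_t t_assoc]]] := ufdD.2 (p :: sc) (sa ++ sb).
- by move=> x; rewrite inE => /predU1P [-> | /sc_irr].
- by move=> x; rewrite mem_cat => /orP [/sa_irr | /sb_irr].
- by rewrite big_cons big_cat /= -Esc -Ea -Eb Ec mulrC.
have p_t0 : associates p (nth 0 t 0) := t_assoc 0%N (ltn0Sn _).
have : nth 0 t 0 \in sa ++ sb by rewrite (perm_mem perm_t) mem_nth // -size_t.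
rewrite mem_cat => /orP [/dvd_prod_mem | /dvd_prod_mem]; [left; rewrite Ea | right; rewrite Eb];
  exact/(associates_dvdl _ p_t0).
Qed.

Lemma ufd_ind (P : D -> Prop) :
  (forall u, u \is a GRing.unit -> P u) ->
  (forall p n, prime_elt p -> P n -> P (n * p)) ->
  forall n, n != 0 -> P n.
Proof.
move=> P_unit P_mul n n0; have [/P_unit // | nun] := boolP (n \is a GRing.unit).
have [s [s_irr ->]] := ufdD.1 n n0 nun.
elim: s s_irr => [|p s IHs] s_irr; first by rewrite big_nil; exact/P_unit/unitr1.
rewrite big_cons mulrC; apply: P_mul; first by apply/irreducible_prime/s_irr; rewrite mem_head.
by apply: IHs => x xs; apply: s_irr; rewrite inE xs orbT.
Qed.

Lemma is_gcd_exists a n : n != 0 -> exists g, is_gcd g a n.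
Proof.
move=> n0; move: n n0 a.
apply: (ufd_ind (P := fun n => forall a, exists g, is_gcd g a n)).
  by move=> u uu a; exists 1; exact: is_gcd_unit.
move=> p n pP IHn a.
have [[a' ->] | npa] := classic (dvd p a).
  by have [g ga'n] := IHn a'; exists (g * p); exact: is_gcd_mul_prime.
by have [g gan] := IHn a; exists g; exact: is_gcd_mul_prime_coprime.
Qed.

Lemma coprime_dvd_mulr n a u : n != 0 -> coprime_elt a n -> dvd n (u * a) -> dvd n u.
Proof.
move=> n0; move: n n0 a u.
apply: (ufd_ind (P := fun n => forall a u, coprime_elt a n -> dvd n (u * a) -> dvd n u)).
  by move=> n un a u _ _; exact: unit_dvd.
move=> p n pP IHn a u cop npua; have [u' -> [cop' nu'a]] := coprime_dvd_mul_prime pP cop npua.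
have [p0 _ _] := pP; apply/(dvd_pmul2r _ _ p0); exact: IHn cop' nu'a.
Qed.

End Factorial.
End Primes.

Section AnnihilatorEquivalence.
Variables (D : idomainType) (m : D).
Implicit Types a b c g u : D.

Definition ann_equiv a b : Prop := forall u, dvd m (u * a) <-> dvd m (u * b).

Lemma ann_equiv_sym a b : ann_equiv a b -> ann_equiv b a.
Proof. by move=> ab u; split=> /ab. Qed.

Lemma ann_equiv_trans a b c : ann_equiv a b -> ann_equiv b c -> ann_equiv a c.
Proof. by move=> ab bc u; split=> [/ab/bc | /bc/ab]. Qed.

Lemma ann_equiv_mul a a' b b' : ann_equiv a a' -> ann_equiv b b' -> ann_equiv (a * b) (a' * b').
Proof.
move=> aa' bb' u; rewrite !mulrA [u * a * b]mulrAC.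
by apply: iff_trans (aa' (u * b)) _; rewrite mulrAC; exact: bb'.
Qed.

Lemma associates_ann_equiv a b : associates a b -> ann_equiv a b.
Proof. by move=> ab u; apply: associates_dvdr; exact: associates_mul (associates_refl u) ab. Qed.

Lemma ann_equiv0 a : ann_equiv a 0 <-> dvd m a.
Proof.
split=> [a0 | ma u]; first by move: (a0 1); rewrite !mul1r => /iffRL; apply; exact: dvd0.
by rewrite mulr0; split=> _; [exact: dvd0 | exact: dvd_mull].
Qed.

Section Factorial.
Hypotheses (ufdD : is_UFD D) (m0 : m != 0).

Lemma dvd_mul_gcdP g m' a u : is_gcd g a m -> m = m' * g -> dvd m (u * a) <-> dvd m' u.
Proof.
move=> [[a1 Ea] [_ g_max]] Em.
have /andP [m'0 g0] : (m' != 0) && (g != 0) by rewrite -negb_or -mulf_eq0 -Em.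
have cop : coprime_elt a1 m'.
  move=> d da1 dm'; apply: dvd1_unit; apply/(dvd_pmul2r _ _ g0); rewrite mul1r.
  by apply: g_max; [rewrite Ea | rewrite Em]; apply/(dvd_pmul2r _ _ g0).
rewrite Em Ea mulrA; split=> [/(dvd_pmul2r _ _ g0) | [k ->]].
  exact: (coprime_dvd_mulr ufdD m'0 cop).
by exists (k * a1); ring.
Qed.

Lemma is_gcd_ann_equiv ga gb a b :
  is_gcd ga a m -> is_gcd gb b m -> associates ga gb <-> ann_equiv a b.
Proof.
move=> Ga Gb; have [ma Ema] := Ga.2.1; have [mb Emb] := Gb.2.1.
have Ka u := dvd_mul_gcdP u Ga Ema; have Kb u := dvd_mul_gcdP u Gb Emb.
have mab : ma * ga = mb * gb by rewrite -Ema -Emb.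
have /andP [mb0 gb0] : (mb != 0) && (gb != 0) by rewrite -negb_or -mulf_eq0 -Emb.
split=> [ab | ab].
  have mba : associates mb ma by apply: associates_cofactor gb0 ab; rewrite mulrC mab mulrC.
  by move=> u; rewrite Ka Kb (associates_dvdl _ mba).
have ma_mb : dvd ma mb by apply/Ka/ab/Kb; exact: dvdd.
have mb_ma : dvd mb ma by apply/Kb/ab/Ka; exact: dvdd.
exact/associates_sym/(associates_cofactor mab mb0)/dvd_associates.
Qed.

End Factorial.
End AnnihilatorEquivalence.

Section AssociateClasses.
Variable D : idomainType.
Implicit Types a b c m : D.

Lemma Dcls_eq a b : Dcls a = Dcls b <-> associates a b.
Proof. exact: cls_eq (@associates_refl D) (@associates_sym D) (@associates_trans D) a b. Qed.

Lemma Dcls_surj (X : Dp D) : exists a, X = Dcls a.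
Proof. by exists (Defs.repr X); rewrite /Dcls cls_repr. Qed.

Lemma Dmul_cls a b : Dmul (Dcls a) (Dcls b) = Dcls (a * b).
Proof.
exact: qop_cls (@associates_refl D) (@associates_sym D) (@associates_trans D)
  (@associates_mul D) a b.
Qed.

Lemma ideal_gen_Dcls m c : ideal_gen (@Dmul D) (Dcls m) (Dcls c) <-> dvd m c.
Proof.
split=> [Jc | [k ->]]; last by right; left; exists (Dcls k); rewrite Dmul_cls.
suff [x /Dcls_eq xc mx] : exists2 x, Dcls x = Dcls c & dvd m x.
  by rewrite -(associates_dvdr _ xc).
case: Jc => [-> | [[S ES] | [[S ES] | [S [T EST]]]]]; first by exists m; last exact: dvdd.
- have [s Es] := Dcls_surj S; rewrite Es Dmul_cls in ES.
  by exists (s * m); [rewrite ES | exact/dvd_mull/dvdd].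
- have [s Es] := Dcls_surj S; rewrite Es Dmul_cls in ES.
  by exists (m * s); [rewrite ES | exact/dvd_mulr/dvdd].
- have [s Es] := Dcls_surj S; have [t Et] := Dcls_surj T.
  rewrite Es Et !Dmul_cls in EST.
  by exists (s * m * t); [rewrite EST | exact/dvd_mulr/dvd_mull/dvdd].
Qed.

Lemma P_rel_ideal_gen_Dcls m a b :
  P_rel (@Dmul D) (ideal_gen (@Dmul D) (Dcls m)) (Dcls a) (Dcls b) <-> ann_equiv m a b.
Proof.
rewrite /P_rel; split=> [Eab u | ab].
  have := congr1 (fun H => H (Dcls u, Dcls 1)) Eab; rewrite /dots /= !Dmul_cls !mulr1.
  by move=> E; rewrite -!ideal_gen_Dcls E.
apply: functional_extensionality => -[X Y]; rewrite /dots /=.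
have [x ->] := Dcls_surj X; have [y ->] := Dcls_surj Y.
apply: propositional_extensionality; rewrite !Dmul_cls !ideal_gen_Dcls.
by rewrite ![x * _ * y]mulrAC; exact: ab.
Qed.

Lemma tau'_Dcls m a b : is_UFD D -> m != 0 ->
  tau' (Dcls m) (Dcls a) (Dcls b) <-> ann_equiv m a b.
Proof.
move=> ufdD m0; split.
  move=> [a' [b' [m' [ga [gb [/Dcls_eq aa' [/Dcls_eq bb' [/Dcls_eq mm' [Ga [Gb]]]]]]]]]].
  move/Dcls_eq; rewrite (is_gcd_ann_equiv ufdD m0 (is_gcd_associatesr mm' Ga)
                                               (is_gcd_associatesr mm' Gb)).
  move=> /(ann_equiv_trans (associates_ann_equiv m aa')) /ann_equiv_trans; apply.
  exact/ann_equiv_sym/associates_ann_equiv.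
move=> ab; have [ga Ga] := is_gcd_exists ufdD a m0; have [gb Gb] := is_gcd_exists ufdD b m0.
exists a, b, m, ga, gb; do 5 split=> //.
exact/Dcls_eq/(is_gcd_ann_equiv ufdD m0 Ga Gb).
Qed.

End AssociateClasses.

Section AnnihilatorQuotient.
Variables (D : idomainType) (m : D) (R : Dp D -> Dp D -> Prop).
Hypothesis R_Dcls : forall a b, R (Dcls a) (Dcls b) <-> ann_equiv m a b.

Local Notation Q := (quot R).
Local Notation E a := (cls R (Dcls a)).
Local Notation mulQ := (@qop (Dp D) (@Dmul D) R).

Lemma R_equiv_cong :
  [/\ forall X, R X X, forall X Y, R X Y -> R Y X,
      forall X Y Z, R X Y -> R Y Z -> R X Z &
      forall X X' Y Y', R X X' -> R Y Y' -> R (Dmul X Y) (Dmul X' Y')].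
Proof.
split=> [X | X Y | X Y Z | X X' Y Y'].
- by have [a ->] := Dcls_surj X; apply/R_Dcls.
- by have [a ->] := Dcls_surj X; have [b ->] := Dcls_surj Y; rewrite !R_Dcls; exact: ann_equiv_sym.
- have [a ->] := Dcls_surj X; have [b ->] := Dcls_surj Y; have [c ->] := Dcls_surj Z.
  rewrite !R_Dcls; exact: ann_equiv_trans.
- have [a ->] := Dcls_surj X; have [b ->] := Dcls_surj Y.
  have [a' ->] := Dcls_surj X'; have [b' ->] := Dcls_surj Y'.
  rewrite !Dmul_cls !R_Dcls; exact: ann_equiv_mul.
Qed.

Lemma clsE_eq a b : E a = E b <-> ann_equiv m a b.
Proof. by have [Rr Rs Rt _] := R_equiv_cong; rewrite -R_Dcls; exact: cls_eq. Qed.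

Lemma clsE_surj (X : Q) : exists a, X = E a.
Proof. by have [a Ea] := Dcls_surj (Defs.repr X); exists a; rewrite -Ea cls_repr. Qed.

Lemma mulQ_clsE a b : mulQ (E a) (E b) = E (a * b).
Proof. by have [Rr Rs Rt Rc] := R_equiv_cong; rewrite qop_cls // Dmul_cls. Qed.

Lemma annih_clsE a u : annih mulQ (E 0) (E a) (E u) <-> dvd m (u * a).
Proof. by rewrite /annih mulQ_clsE clsE_eq ann_equiv0. Qed.

Lemma condition_star_ann_quotient : condition_star mulQ.
Proof.
split; [|split].
- move=> X Y Z; have [x ->] := clsE_surj X; have [y ->] := clsE_surj Y.
  by have [z ->] := clsE_surj Z; rewrite !mulQ_clsE mulrA.
- by move=> X Y; have [x ->] := clsE_surj X; have [y ->] := clsE_surj Y; rewrite !mulQ_clsE mulrC.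
exists (E 1), (E 0); split; [|split; [|split]].
- by move=> X; have [x ->] := clsE_surj X; rewrite !mulQ_clsE mul1r mulr1.
- by move=> X; have [x ->] := clsE_surj X; rewrite !mulQ_clsE mul0r mulr0.
- move=> S; have [a ->] := clsE_surj S => a_ne1 ann_a; apply: a_ne1; apply/clsE_eq => u.
  rewrite mulr1; split=> [mua | /dvd_mulr //].
  have : annih mulQ (E 0) (E a) (E u) by exact/annih_clsE.
  by rewrite ann_a => /clsE_eq; rewrite -ann_equiv0.
- move=> S T; have [a ->] := clsE_surj S; have [b ->] := clsE_surj T => ann_ab.
  by apply/clsE_eq => u; rewrite -!annih_clsE ann_ab.
Qed.

End AnnihilatorQuotient.

Theorem corollary3 (D : idomainType) (m : D) :
  is_UFD D -> m != 0 ->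
  tau' (Dcls m) = P_rel (@Dmul D) (ideal_gen (@Dmul D) (Dcls m)) /\
  condition_star (@qop (Dp D) (@Dmul D) (tau' (Dcls m))).
Proof.
move=> ufdD m0; split; last by apply: condition_star_ann_quotient => a b; exact: tau'_Dcls.
apply: functional_extensionality => X; apply: functional_extensionality => Y.
have [a ->] := Dcls_surj X; have [b ->] := Dcls_surj Y.
apply: propositional_extensionality.
exact: iff_trans (tau'_Dcls _ _ ufdD m0) (iff_sym (P_rel_ideal_gen_Dcls _ _ _)).
Qed.
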